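(* Let $\mathscr{B}$ be a minimal balanced collection on $N$ and $S'\in\mathscr{B}$. Let $z\in\mathbb{R}^N_+$ with $z\neq\mathbf{1}^{S'}$ and $z_i>0$ if and only if $i\in S'$, and let $Z=\{\mathbf{1}^S\mid S\in\mathscr{B}\setminus\{S'\}\}\cup\{z\}$. If $Z$ is a minimal balanced set, then (a) there exists a vector $y$ in the orthogonal complement of $\mathrm{span}\{\mathbf{1}^S\mid S\in\mathscr{B}\setminus\{S'\}\}$ with $z\cdot y\neq0$, and (b) $z\in\mathrm{span}\{\mathbf{1}^S\mid S\in\mathscr{B}\}$.
   Context: $\mathbf{1}^S\in\mathbb{R}^N$ is the characteristic vector of $S\subseteq N$, $\mathbb{R}^N_+$ the nonnegative orthant. A collection $\mathscr{B}$ of nonempty subsets of $N$ is balanced if there exist positive weights $(\lambda_S)$ with $\sum_{S\in\mathscr{B}}\lambda_S\mathbf{1}^S=\mathbf{1}^N$, and minimal if no proper subcollection is balanced. A finite set $Z\subseteq\mathbb{R}^N_+\setminus\{0\}$ is a balanced set if there exist positive weights $(\delta_w)_{w\in Z}$ with $\sum_{w\in Z}\delta_w w=\mathbf{1}^N$; it is a minimal balanced set if no proper subset of $Z$ is balanced. *)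

From HB Require Import structures.
From mathcomp Require Import all_boot all_order all_algebra.
From mathcomp Require Import finmap.
Set Implicit Arguments. Unset Strict Implicit. Unset Printing Implicit Defensive.
Import Order.TTheory GRing.Theory Num.Theory.
Local Open Scope ring_scope.
Local Open Scope fset_scope.

Section Defs.
Variables (R : realFieldType) (n : nat).
(* N = 'I_n, vectors of R^N are row vectors 'rV[R]_n *)

Definition chi (S : {set 'I_n}) : 'rV[R]_n :=
  \row_i (if i \in S then 1 else 0).

Definition dotv (x y : 'rV[R]_n) : R := \sum_i x 0 i * y 0 i.

Definition nonneg_vec (w : 'rV[R]_n) : Prop := forall i, 0 <= w 0 i.

Definition balanced_coll (B : {set {set 'I_n}}) : Prop :=
  (forall S, S \in B -> S != set0) /\
  exists lam : {set 'I_n} -> R,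
    (forall S, S \in B -> 0 < lam S) /\
    \sum_(S in B) lam S *: chi S = chi setT.

Definition minimal_balanced_coll (B : {set {set 'I_n}}) : Prop :=
  balanced_coll B /\ forall C : {set {set 'I_n}}, C \proper B -> ~ balanced_coll C.

Definition balanced_set (Z : {fset 'rV[R]_n}) : Prop :=
  (forall w, w \in Z -> nonneg_vec w /\ w != 0) /\
  exists delta : 'rV[R]_n -> R,
    (forall w, w \in Z -> 0 < delta w) /\
    \sum_(w <- Z) delta w *: w = chi setT.

Definition minimal_balanced_set (Z : {fset 'rV[R]_n}) : Prop :=
  balanced_set Z /\ forall Z' : {fset 'rV[R]_n}, Z' `<` Z -> ~ balanced_set Z'.

Definition in_span (C : {set {set 'I_n}}) (v : 'rV[R]_n) : Prop :=
  exists lam : {set 'I_n} -> R, v = \sum_(S in C) lam S *: chi S.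

Definition in_orth_compl (C : {set {set 'I_n}}) (y : 'rV[R]_n) : Prop :=
  forall v, in_span C v -> dotv v y = 0.

End Defs.

From HB Require Import structures.
From mathcomp Require Import all_boot all_order all_algebra finmap.
Import Order.TTheory GRing.Theory Num.Theory.
Local Open Scope ring_scope.
Local Open Scope fset_scope.

(** Part (b): the balancing equation of [Z] expresses [z] through [1^N] and
  the [1^S], [S] in [B :\ S'], and [1^N] lies in the span of [B].
  Part (a): otherwise [z] would lie in the span of the other elements of [Z],
  giving a linear dependency of [Z] with a positive coefficient on [z]; moving
  the balancing weights along that dependency until one of them vanishes
  yields a balanced proper subset of [Z], against minimality.  A vector
  outside a subspace is never orthogonal to all of its orthogonal complement. *)

Section PositiveCombination.
Context {R : realFieldType} {V : lmodType R}.
Implicit Types (Z : {fset V}) (d c : V -> R) (v : V).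

Lemma big_fset_pos_support Z d :
  (forall w, w \in Z -> 0 <= d w) ->
  \sum_(w <- [fset w in Z | 0 < d w]) d w *: w = \sum_(w <- Z) d w *: w.
Proof.
move=> d_ge0; rewrite big_fset /= big_mkcond; apply: eq_big_seq => w wZ.
case: ifP => // /negbT; rewrite -leNgt => dw_le0.
by rewrite (@le_anti _ _ (d w) 0) ?d_ge0 ?dw_le0 ?scale0r.
Qed.

Lemma positive_combination_shrink Z d c v :
  (forall w, w \in Z -> 0 < d w) -> \sum_(w <- Z) d w *: w = v ->
  \sum_(w <- Z) c w *: w = 0 -> (exists2 w, w \in Z & 0 < c w) ->
  exists Z' d', [/\ Z' `<` Z, forall w, w \in Z' -> 0 < d' w
                   & \sum_(w <- Z') d' w *: w = v].
Proof.
move=> d_gt0 dZ cZ [w0 w0Z cw0_gt0].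
pose ratio (w : Z) := d (val w) / c (val w).
have [w1 cw1_gt0 w1_min] :=
  @arg_minP _ _ Z [` w0Z] (fun w : Z => 0 < c (val w)) ratio cw0_gt0.
pose d' w := d w - ratio w1 * c w.
have d'_ge0 w : w \in Z -> 0 <= d' w.
  move=> wZ; rewrite subr_ge0; have [cw_gt0|cw_le0] := ltP 0 (c w).
    by rewrite -ler_pdivlMr //; apply: (w1_min [` wZ]).
  apply: le_trans (ltW (d_gt0 w wZ)); rewrite mulr_ge0_le0 // ltW //.
  by rewrite divr_gt0 ?d_gt0 ?fsvalP.
have d'w1 : d' (val w1) = 0 by rewrite /d' /ratio mulrVK ?subrr ?unitfE ?gt_eqF.
exists [fset w in Z | 0 < d' w], d'; split.
- rewrite fproperEneq fset_sub andbT; apply/eqP => /fsetP/(_ (val w1)).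
  by rewrite !inE /= fsvalP d'w1 ltxx.
- by move=> w; rewrite !inE => /andP[].
rewrite big_fset_pos_support //.
under eq_bigr do rewrite scalerBl -scalerA.
by rewrite sumrB -scaler_sumr cZ scaler0 subr0.
Qed.

End PositiveCombination.

Lemma dependent_balanced_set_not_minimal (R : realFieldType) (n : nat)
    (Z : {fset 'rV[R]_n}) (c : 'rV[R]_n -> R) :
  \sum_(w <- Z) c w *: w = 0 -> (exists2 w, w \in Z & 0 < c w) ->
  ~ minimal_balanced_set Z.
Proof.
move=> cZ c_pos [[Z_nonneg [d [d_gt0 dZ]]] Z_min].
have [Z' [d' [Z'Z d'_gt0 d'Z']]] :=
  @positive_combination_shrink _ _ _ _ c _ d_gt0 dZ cZ c_pos.
apply: (Z_min Z' Z'Z); split; last by exists d'.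
by move=> w /(fsubsetP (fproper_sub Z'Z)); apply: Z_nonneg.
Qed.

Section Span.
Context {R : realFieldType} {n : nat}.
Implicit Types (C : {set {set 'I_n}}) (v : 'rV[R]_n).

Lemma chi_inj : injective (@chi R n).
Proof.
move=> S T eST; apply/setP => i.
have := congr1 (fun v : 'rV[R]_n => v 0 i) eST; rewrite !mxE.
by do 2![case: (_ \in _)] => // /eqP; rewrite ?oner_eq0 // eq_sym oner_eq0.
Qed.

Lemma chi_neq_of_support (z : 'rV[R]_n) (S' : {set 'I_n}) :
  (forall i, 0 < z 0 i <-> i \in S') -> z != chi R S' -> forall S, z != chi R S.
Proof.
move=> z_supp zNS' S; apply: contraNneq zNS' => zS; rewrite zS.
apply/eqP; congr (chi R); apply/setP => i; apply/idP/idP => [iS | /z_supp].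
  by apply/z_supp; rewrite zS mxE iS ltr01.
by rewrite zS mxE; case: (i \in S); rewrite ?ltxx.
Qed.

Lemma big_imfset_chi C (F : 'rV[R]_n -> 'rV[R]_n) :
  \sum_(w <- [fset chi R S | S in enum C]) F w = \sum_(S in C) F (chi R S).
Proof.
rewrite big_imfset /=; last by move=> S T _ _; apply: chi_inj.
by rewrite undup_id ?enum_uniq // big_enum.
Qed.

Lemma in_span0 C : in_span C (0 : 'rV[R]_n).
Proof. by exists (fun=> 0); rewrite big1 // => S _; rewrite scale0r. Qed.

Lemma in_spanD C u v : in_span C u -> in_span C v -> in_span C (u + v).
Proof.
move=> [a ->] [b ->]; exists (fun S => (a S + b S)%R).
by rewrite -big_split; apply: eq_bigr => S _; rewrite scalerDl.
Qed.

Lemma in_spanZ C k v : in_span C v -> in_span C (k *: v).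
Proof.
move=> [a ->]; exists (fun S => (k * a S)%R).
by rewrite scaler_sumr; apply: eq_bigr => S _; rewrite scalerA.
Qed.

Lemma in_span_chi C T : T \in C -> in_span C (chi R T).
Proof.
move=> TC; exists (fun S => (S == T)%:R).
rewrite (bigD1 T) //= eqxx scale1r big1 ?addr0 // => S /andP[_ /negbTE ->].
by rewrite scale0r.
Qed.

Lemma in_span_sum C (I : finType) (P : pred I) (F : I -> 'rV[R]_n) :
  (forall i, P i -> in_span C (F i)) -> in_span C (\sum_(i | P i) F i).
Proof.
move=> F_span; elim/big_rec: _ => [|i v Pi]; first exact: in_span0.
exact: in_spanD (F_span i Pi).
Qed.

Lemma in_span_subset C C' v : C \subset C' -> in_span C v -> in_span C' v.
Proof.
move=> CC' [a ->]; apply: in_span_sum => S SC.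
by apply/in_spanZ/in_span_chi; apply: (subsetP CC').
Qed.

Lemma in_span_imfset_chi C v : in_span C v ->
  exists a : 'rV[R]_n -> R,
    v = \sum_(w <- [fset chi R S | S in enum C]) a w *: w.
Proof.
move=> [mu ->]; exists (fun w => \sum_(S in C | chi R S == w) mu S).
rewrite big_imfset_chi; apply: eq_bigr => S SC; congr (_ *: _).
rewrite (big_pred1 S) // => T /=.
by rewrite (inj_eq chi_inj) andb_idl // => /eqP->.
Qed.

(* The orthogonal vector is a column of [cokermx] of the span, one on which [z]
  does not vanish. *)
Lemma not_in_span_orth C z : ~ in_span C z ->
  exists y : 'rV[R]_n, in_orth_compl C y /\ dotv z y != 0.
Proof.
move=> zNspan; pose K := cokermx (\sum_(S in C) <<chi R S>>)%MS.
have chiK S : S \in C -> chi R S *m K = 0.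
  move=> SC; apply/eqP; rewrite -submxE.
  by apply: (sumsmx_sup S) => //; rewrite genmxE.
have [j zKj] : exists j, (z *m K) 0 j != 0.
  apply/existsP; apply: contra_notT zNspan => /existsPn zK0.
  have /sub_sumsmxP [u ->] : (z <= \sum_(S in C) <<chi R S>>)%MS.
    rewrite submxE; apply/eqP/rowP => j.
    by rewrite [RHS]mxE; apply/eqP; move: (zK0 j); rewrite negbK.
  apply: in_span_sum => S SC.
  have /sub_rVP [a ->] : (u S *m <<chi R S>> <= chi R S)%MS.
    by rewrite -(genmxE (chi R S)) submxMl.
  exact/in_spanZ/in_span_chi.
have dotK v : dotv v (\row_i K i j) = (v *m K) 0 j.
  by rewrite /dotv mxE; apply: eq_bigr => i _; rewrite mxE.
exists (\row_i K i j); split; last by rewrite dotK.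
move=> v [mu ->]; rewrite dotK mulmx_suml summxE big1 // => S SC.
by rewrite -scalemxAl chiK ?scaler0 ?mxE.
Qed.

End Span.

Theorem proposition6p2 (R : realFieldType) (n : nat)
  (B : {set {set 'I_n}}) (S' : {set 'I_n}) (z : 'rV[R]_n) :
  minimal_balanced_coll R B -> S' \in B ->
  nonneg_vec z -> z != chi R S' ->
  (forall i, (0 < z 0 i) <-> (i \in S')) ->
  minimal_balanced_set
    ([fset chi R S | S in enum (B :\ S')] `|` [fset z]) ->
  (exists y : 'rV[R]_n, in_orth_compl (B :\ S') y /\ dotv z y != 0) /\
  in_span B z.
Proof.
move=> [[_ [lam [_ lamB]]] _] _ _ zNS' z_supp Z_min.
set C := B :\ S' in Z_min *; set Zc := [fset chi R S | S in enum C] in Z_min *.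
have zNZc : z \notin Zc.
  apply/negP => /imfsetP [S _]; apply/eqP.
  exact: chi_neq_of_support z_supp zNS' S.
have z_in_Z : z \in Zc `|` [fset z] by rewrite !inE eqxx orbT.
have big_Z (F : 'rV[R]_n -> 'rV[R]_n) :
    \sum_(w <- Zc `|` [fset z]) F w = (F z + \sum_(w <- Zc) F w)%R.
  by rewrite fsetUC big_fsetU1.
split.
  apply: not_in_span_orth => /in_span_imfset_chi [a za].
  pose c w : R := if w == z then 1 else - a w.
  apply: (@dependent_balanced_set_not_minimal _ _ _ c) Z_min.
    rewrite big_Z /c eqxx big_seq (eq_bigr (fun w => - (a w *: w))).
      by rewrite -big_seq sumrN -za scale1r subrr.
    by move=> w wZc; rewrite (negbTE (memPn zNZc w wZc)) scaleNr.
  by exists z; rewrite // /c eqxx.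
have [[_ [del [del_gt0 delZ]]] _] := Z_min.
move: delZ; rewrite big_Z big_imfset_chi => /(canRL (addrK _)) delZ.
have del_neq0 : del z != 0 by rewrite gt_eqF ?del_gt0.
rewrite -[z](scalerK del_neq0) delZ -scaleN1r; apply: in_spanZ; apply: in_spanD.
  by exists lam.
apply: in_spanZ; apply: in_span_subset (subsetDl B [set S']) _.
by apply: in_span_sum => S SC; apply/in_spanZ/in_span_chi.
Qed.
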